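(* Let $k\ge2$, $n\ge1$ be integers, let $\bar{\mathcal{P}}\in\mathbb{R}^{[k,n]}$ be a columnwise-substochastic tensor, $\mathbf{v}\in\mathbb{R}^n$ a stochastic vector and $\alpha\in[0,1)$. If $\alpha<\frac{1}{k-1}$, then the MLPPR system $(\mathbf{e}^T\mathbf{y})^{k-2}\mathbf{y}-\alpha\bar{\mathcal{P}}\mathbf{y}^{k-1}=\mathbf{v}$ has a unique nonnegative solution $\mathbf{y}\in\mathbb{R}^n_+$.
   Context: For $\mathcal{P}\in\mathbb{R}^{[k,n]}$ (real tensors of order $k$, dimension $n$) and $\mathbf{y}\in\mathbb{R}^n$, $(\mathcal{P}\mathbf{y}^{k-1})_i=\sum_{i_2,\dots,i_k}p_{i i_2\dots i_k}y_{i_2}\cdots y_{i_k}$. $\bar{\mathcal{P}}$ is columnwise-substochastic if its entries are nonnegative and $\sum_{i}\bar p_{i i_2\dots i_k}\le1$ for all $i_2,\dots,i_k$. $\mathbf{e}$ is the all-ones vector; a stochastic vector is nonnegative with entries summing to $1$. *)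

From mathcomp Require Import all_boot all_order all_algebra.
From mathcomp Require Import reals.
Set Implicit Arguments. Unset Strict Implicit. Unset Printing Implicit Defensive.
Import Order.TTheory GRing.Theory Num.Theory.
Local Open Scope ring_scope.

(* A real tensor of order k and dimension n: entries p_{i i_2 ... i_k}, the
   first index i : 'I_n and the remaining k-1 indices encoded as a finite
   function idx : 'I_(k.-1) -> 'I_n  (idx j = i_{j+2}). *)
Definition tensor (R : realType) (k n : nat) :=
  'I_n -> {ffun 'I_(k.-1) -> 'I_n} -> R.

Definition tapply (R : realType) (k n : nat) (P : tensor R k n)
  (y : 'I_n -> R) (i : 'I_n) : R :=
  \sum_(idx : {ffun 'I_(k.-1) -> 'I_n}) P i idx * \prod_(j < k.-1) y (idx j).

Definition col_substochastic (R : realType) (k n : nat) (P : tensor R k n) :=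
  (forall i idx, 0 <= P i idx) /\
  (forall idx, \sum_(i < n) P i idx <= 1).

Definition stochastic (R : realType) (n : nat) (v : 'I_n -> R) :=
  (forall i, 0 <= v i) /\ \sum_(i < n) v i = 1.

Definition nonneg_vec (R : realType) (n : nat) (y : 'I_n -> R) :=
  forall i, 0 <= y i.

Definition mlppr_solution (R : realType) (k n : nat) (alpha : R)
  (P : tensor R k n) (v y : 'I_n -> R) :=
  forall i, (\sum_(j < n) y j) ^+ (k - 2) * y i - alpha * tapply P y i = v i.

From mathcomp Require Import all_boot all_order all_algebra.
From mathcomp Require Import reals.
From HB Require Import structures.
From mathcomp Require Import boolp classical_sets functions interval_inference.
From mathcomp Require Import topology normedtype sequences exp.
From mathcomp Require Import ring.
Import Order.TTheory GRing.Theory Num.Theory numFieldNormedType.Exports.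
Local Open Scope classical_set_scope.
Local Open Scope ring_scope.
Set Implicit Arguments. Unset Strict Implicit. Unset Printing Implicit Defensive.

(* Dividing a nonnegative solution y by its mass e^T y turns the MLPPR system into
   the fixed-point equation x = (1 - alpha e^T P x^{k-1}) v + alpha P x^{k-1} on
   stochastic vectors, and conversely every such fixed point x rescales to the
   solution y = s x with s^{k-1} (1 - alpha e^T P x^{k-1}) = 1.  Adding the
   column deficits of P along v makes the map a convex combination of v and a
   column-stochastic tensor applied to x^{k-1}; since x |-> x^{k-1} is
   (k-1)-Lipschitz for the l1 distance on stochastic vectors (telescoping), the
   map is an l1 contraction of ratio alpha (k-1) < 1, and Banach's theorem gives
   the unique fixed point. *)

Definition l1dist (R : numDomainType) n (x z : 'I_n -> R) := \sum_i `|x i - z i|.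

Lemma l1dist_ge0 (R : numDomainType) n (x z : 'I_n -> R) : 0 <= l1dist x z.
Proof. exact: sumr_ge0. Qed.

Definition telescope_factor (R : numDomainType) m (a b : 'I_m -> R) (j l : 'I_m) :=
  if (l < j)%N then b l else if l == j then `|a l - b l| else a l.

Lemma ler_norm_prodrB (R : numDomainType) m (a b : 'I_m -> R) :
  (forall l, 0 <= a l) -> (forall l, 0 <= b l) ->
  `|\prod_l a l - \prod_l b l| <= \sum_j \prod_l telescope_factor a b j l.
Proof.
elim: m a b => [|m IH] a b a_ge0 b_ge0; first by rewrite !big_ord0 subrr normr0.
pose a' (l : 'I_m) := a (lift ord0 l); pose b' (l : 'I_m) := b (lift ord0 l).
rewrite !big_ord_recl /telescope_factor /=.
rewrite [\sum_(i < m) _](eq_bigr (fun j => b ord0 * \prod_l telescope_factor a' b' j l));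
  last by move=> j _; rewrite big_ord_recl.
rewrite -mulr_sumr.
have -> : a ord0 * \prod_l a' l - b ord0 * \prod_l b' l =
    (a ord0 - b ord0) * \prod_l a' l + b ord0 * (\prod_l a' l - \prod_l b' l).
  by ring.
apply: (le_trans (ler_normD _ _)); apply: lerD.
  by rewrite normrM (ger0_norm (prodr_ge0 _ (fun l _ => a_ge0 _))).
rewrite normrM ger0_norm // ler_wpM2l //.
by apply: IH => l; [exact: a_ge0 | exact: b_ge0].
Qed.

Section tensor_power.
Variables (R : realType) (m n : nat).
Implicit Types x z : 'I_n -> R.

Definition tensor_power x (idx : {ffun 'I_m -> 'I_n}) := \prod_(j < m) x (idx j).

Lemma tensor_power_ge0 x idx : (forall i, 0 <= x i) -> 0 <= tensor_power x idx.
Proof. by move=> x_ge0; apply: prodr_ge0. Qed.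

Lemma sum_tensor_power x : \sum_idx tensor_power x idx = (\sum_i x i) ^+ m.
Proof.
by rewrite -(bigA_distr_bigA (fun=> x)) prodr_const card_ord.
Qed.

Lemma sum_tensor_power_stochastic x : stochastic x -> \sum_idx tensor_power x idx = 1.
Proof. by case=> _ sx; rewrite sum_tensor_power sx expr1n. Qed.

Lemma l1dist_tensor_power x z : stochastic x -> stochastic z ->
  \sum_idx `|tensor_power x idx - tensor_power z idx| <= m%:R * l1dist x z.
Proof.
move=> [x_ge0 sx] [z_ge0 sz].
(* [F j l (idx l)] is [telescope_factor (x \o idx) (z \o idx) j l], and the
   sum over [idx] of its product over [l] factors into l1dist x z. *)
pose F (j l : 'I_m) (i : 'I_n) :=
  if (l < j)%N then z i else if l == j then `|x i - z i| else x i.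
apply: (@le_trans _ _ (\sum_(idx : {ffun 'I_m -> 'I_n}) \sum_j \prod_l F j l (idx l))).
  by apply: ler_sum => idx _; apply: ler_norm_prodrB.
have -> : m%:R * l1dist x z = \sum_(j < m) l1dist x z.
  by rewrite sumr_const card_ord mulr_natl.
rewrite exchange_big /=.
apply: ler_sum => j _; rewrite -(bigA_distr_bigA (F j)) /= (bigD1 j) //=.
rewrite /F ltnn eqxx [X in _ * X]big1 ?mulr1 // => l /negbTE ->.
by case: (l < j)%N.
Qed.

End tensor_power.

Section mlppr_map.
Variables (R : realType) (k n : nat) (P : tensor R k n) (v : 'I_n -> R) (alpha : R).
Hypotheses (P_sub : col_substochastic P) (v_stoch : stochastic v).
Hypotheses (alpha_ge0 : 0 <= alpha) (alpha_lt1 : alpha < 1).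
Implicit Types x z : 'I_n -> R.

Lemma tapply_ge0 x i : (forall j, 0 <= x j) -> 0 <= tapply P x i.
Proof.
move=> x_ge0; apply: sumr_ge0 => idx _.
by apply: mulr_ge0; [exact: P_sub.1 | exact: tensor_power_ge0].
Qed.

Lemma sum_tapply x :
  \sum_i tapply P x i = \sum_idx (\sum_i P i idx) * tensor_power x idx.
Proof. by rewrite exchange_big; apply: eq_bigr => idx _; rewrite mulr_suml. Qed.

Lemma sum_tapply_le1 x : stochastic x -> \sum_i tapply P x i <= 1.
Proof.
move=> x_stoch; rewrite sum_tapply -(sum_tensor_power_stochastic k.-1 x_stoch).
apply: ler_sum => idx _; rewrite ler_piMl ?P_sub.2 //.
exact: tensor_power_ge0 x_stoch.1.
Qed.

Definition mlppr_map x i :=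
  (1 - alpha * \sum_l tapply P x l) * v i + alpha * tapply P x i.

Lemma mlppr_weight_gt0 x : stochastic x -> 0 < 1 - alpha * \sum_l tapply P x l.
Proof.
move=> x_stoch; rewrite subr_gt0.
by apply: le_lt_trans alpha_lt1; rewrite ler_piMr ?sum_tapply_le1.
Qed.

Lemma mlppr_map_stochastic x : stochastic x -> stochastic (mlppr_map x).
Proof.
move=> x_stoch; split=> [i|].
  apply: addr_ge0; apply: mulr_ge0; rewrite ?v_stoch.1 //.
    exact/ltW/mlppr_weight_gt0.
  exact: tapply_ge0 x_stoch.1.
rewrite big_split -!mulr_sumr v_stoch.2 /=; ring.
Qed.

Definition stochastic_completion i idx := P i idx + v i * (1 - \sum_l P l idx).

Lemma stochastic_completion_ge0 i idx : 0 <= stochastic_completion i idx.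
Proof.
apply: addr_ge0; first exact: P_sub.1.
by apply: mulr_ge0; rewrite ?v_stoch.1 // subr_ge0 P_sub.2.
Qed.

Lemma sum_stochastic_completion idx : \sum_i stochastic_completion i idx = 1.
Proof. by rewrite big_split -mulr_suml v_stoch.2 /=; ring. Qed.

Lemma mlppr_mapE x i : stochastic x ->
  mlppr_map x i = alpha * \sum_idx stochastic_completion i idx * tensor_power x idx
                  + (1 - alpha) * v i.
Proof.
move=> x_stoch.
have <- : tapply P x i + v i * (1 - \sum_l tapply P x l) =
    \sum_idx stochastic_completion i idx * tensor_power x idx.
  rewrite sum_tapply -[in X in v i * (X - _)](sum_tensor_power_stochastic k.-1 x_stoch).
  rewrite /tapply mulrBr !mulr_sumr -sumrB -big_split /=.
  by apply: eq_bigr => idx _; rewrite /stochastic_completion /tensor_power; ring.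
by rewrite /mlppr_map; ring.
Qed.

Lemma mlppr_map_lipschitz x z : stochastic x -> stochastic z ->
  l1dist (mlppr_map x) (mlppr_map z) <= alpha * k.-1%:R * l1dist x z.
Proof.
move=> x_stoch z_stoch.
pose d (idx : {ffun 'I_k.-1 -> 'I_n}) := tensor_power x idx - tensor_power z idx.
apply: (@le_trans _ _ (\sum_i alpha *
    \sum_(idx : {ffun 'I_k.-1 -> 'I_n}) stochastic_completion i idx * `|d idx|)).
  apply: ler_sum => i _.
  rewrite !mlppr_mapE // [in X in _ - X]addrC addrKA -mulrBr -sumrB.
  rewrite normrM ger0_norm // ler_wpM2l //; apply: (le_trans (ler_norm_sum _ _ _)).
  apply: ler_sum => idx _.
  by rewrite -mulrBr normrM ger0_norm ?stochastic_completion_ge0.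
rewrite -mulr_sumr -mulrA ler_wpM2l // exchange_big /=.
apply: le_trans (l1dist_tensor_power _ x_stoch z_stoch).
by apply: ler_sum => idx _; rewrite -mulr_suml sum_stochastic_completion mul1r.
Qed.

End mlppr_map.

Lemma iter_contraction_fixed_point (R : realType) (X : completeNormedModType R)
    (U : set X) (f : X -> X) (N : nat) (q : R) :
  closed U -> U !=set0 -> (forall x, U x -> U (f x)) -> 0 <= q -> q < 1 ->
  (forall x y, U x -> U y -> `|iter N f x - iter N f y| <= q * `|x - y|) ->
  exists2 p, U p & f p = p.
Proof.
move=> U_closed [x0 Ux0] fU q_ge0 q_lt1 iter_lip.
have iterU M x : U x -> U (iter M f x) by elim: M => //= M IH /IH /fU.
pose g := mkfun_fun (iterU N).
have g_contraction : is_contraction g.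
  by exists (NngNum q_ge0); split => // -[x y] [Ux Uy]; exact: iter_lip.
have [p Up pE] := banach_fixed_point g_contraction U_closed (ex_intro _ x0 Ux0).
exists p => //; apply: (contraction_fixpoint_unique g_contraction (fU _ Up) Up) => //=.
by rewrite /mkfun -iterSr iterS -pE.
Qed.

(* ['rV[R]_n] carries normed-module and complete instances, but their join is not
   canonical, so Banach's theorem only applies through this alias. *)
Definition complete_row (R : realType) n := 'rV[R]_n.
HB.instance Definition _ (R : realType) n :=
  NormedModule.copy (complete_row R n) 'rV[R]_n.
HB.instance Definition _ (R : realType) n := Complete.copy (complete_row R n) 'rV[R]_n.

Section l1_contraction.
Variables (R : realType) (n : nat).
Implicit Types (x z : 'I_n -> R) (w u : 'rV[R]_n).

Lemma row_ord0E x : (\row_i x i : 'rV_n) ord0 = x.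
Proof. by apply/funext => i; rewrite mxE. Qed.

Lemma normr_rowB_le_l1dist w u : `|w - u| <= l1dist (w ord0) (u ord0).
Proof.
rewrite [leLHS]mx_normrE; apply: bigmax_le => [|[i j] _]; first exact: sumr_ge0.
by rewrite /= (ord1 i) /l1dist (bigD1 j) //= !mxE lerDl sumr_ge0.
Qed.

Lemma l1dist_le_normr_rowB w u : l1dist (w ord0) (u ord0) <= n%:R * `|w - u|.
Proof.
have -> : n%:R * `|w - u| = \sum_(i < n) `|w - u|.
  by rewrite sumr_const card_ord mulr_natl.
apply: ler_sum => i _.
rewrite -[`|w - u|]/(mx_norm (w - u)) mx_normrE.
by apply: le_trans (le_bigmax _ _ (ord0, i)); rewrite /= !mxE.
Qed.

Lemma closed_stochastic_row : closed [set w : 'rV[R]_n | stochastic (w ord0)].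
Proof.
have coord_cont i : continuous (fun w : 'rV[R]_n => w ord0 i) by exact: coord_continuous.
have -> : [set w : 'rV[R]_n | stochastic (w ord0)] =
    \bigcap_i ((fun w => w ord0 i) @^-1` [set r | 0 <= r])
    `&` ((fun w => \sum_i w ord0 i) @^-1` [set r | r = 1]).
  by apply/seteqP; split=> w [w_ge0 sw]; split=> // i *; exact: w_ge0.
apply: closedI.
  apply: closed_bigI => i _; apply: preimage_closed; last exact: closed_ge.
  by move=> w _; exact: coord_cont.
apply: preimage_closed; last exact: closed_eq.
by move=> w _; exact: (continuous_big add_continuous (fun i _ => coord_cont i)).
Qed.

Section contraction.
Variables (f : ('I_n -> R) -> 'I_n -> R) (q : R).
Hypotheses (q_ge0 : 0 <= q) (q_lt1 : q < 1).
Hypothesis f_stoch : forall x, stochastic x -> stochastic (f x).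
Hypothesis f_lip : forall x z, stochastic x -> stochastic z ->
  l1dist (f x) (f z) <= q * l1dist x z.

Lemma l1_contraction_fixed_point_unique x z :
  stochastic x -> stochastic z -> f x = x -> f z = z -> x = z.
Proof.
move=> x_stoch z_stoch fx fz; have := f_lip x_stoch z_stoch; rewrite fx fz.
have := l1dist_ge0 x z; rewrite le_eqVlt => /predU1P[d0 _|d_gt0].
  apply/funext => i; apply/eqP; rewrite -subr_eq0 -normr_eq0; apply/eqP.
  by move/esym/psumr_eq0P: d0 => ->.
by rewrite ler_pMl // leNgt q_lt1.
Qed.

Lemma l1_contraction_fixed_point : (0 < n)%N -> exists x, stochastic x /\ f x = x.
Proof.
move=> n_gt0.
have iter_stoch M x : stochastic x -> stochastic (iter M f x).
  by elim: M => //= M IH /IH /f_stoch.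
have iter_lip M x z : stochastic x -> stochastic z ->
    l1dist (iter M f x) (iter M f z) <= q ^+ M * l1dist x z.
  move=> x_stoch z_stoch; elim: M => [|M IH]; first by rewrite mul1r.
  apply: le_trans (f_lip (iter_stoch M x x_stoch) (iter_stoch M z z_stoch)) _.
  by rewrite exprS -mulrA ler_wpM2l.
have [N qN_lt1] : exists N, q ^+ N * n%:R < 1.
  have n_inv_gt0 : 0 < n%:R^-1 :> R by rewrite invr_gt0 ltr0n.
  have q_norm_lt1 : `|q| < 1 by rewrite ger0_norm.
  have /cvgr0_norm_lt/(_ _ n_inv_gt0) [N _ qN_small] := cvg_expr q_norm_lt1.
  exists N; rewrite -ltr_pdivlMr ?ltr0n // div1r.
  exact: le_lt_trans (ler_norm _) (qN_small N (leqnn N)).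
(* The norm of ['rV_n] is the max norm, in which only a high iterate of [f] is
   guaranteed to contract. *)
pose fr (w : complete_row R n) : complete_row R n := \row_i f (w ord0) i.
have iter_frE M w : iter M fr w ord0 = iter M f (w ord0).
  by elim: M => //= M IH; rewrite row_ord0E IH.
have [p p_stoch /(congr1 (fun w : 'rV_n => w ord0))] :
    exists2 p : complete_row R n, stochastic (p ord0) & fr p = p.
  apply: (@iter_contraction_fixed_point _ _ _ fr N (q ^+ N * n%:R)).
  - exact: closed_stochastic_row.
  - exists (\row_ _ n%:R^-1); rewrite /= row_ord0E; split=> [i|]; rewrite ?invr_ge0 //.
    by rewrite sumr_const card_ord -[_ *+ n]mulr_natr mulVf // pnatr_eq0 -lt0n.
  - by move=> w w_stoch; rewrite /= row_ord0E; exact: f_stoch.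
  - by rewrite mulr_ge0 ?exprn_ge0.
  - exact: qN_lt1.
  - move=> w u w_stoch u_stoch; apply: le_trans (normr_rowB_le_l1dist _ _) _.
    rewrite !iter_frE -mulrA; apply: le_trans (iter_lip _ _ _ w_stoch u_stoch) _.
    by rewrite ler_wpM2l ?exprn_ge0 // l1dist_le_normr_rowB.
by rewrite row_ord0E => fp; exists (p ord0).
Qed.

End contraction.

End l1_contraction.

Section mlppr_solution.
Variables (R : realType) (k n : nat) (P : tensor R k n) (v : 'I_n -> R) (alpha : R).
Hypothesis k_ge2 : (2 <= k)%N.
Implicit Types x y : 'I_n -> R.

Let predk_gt0 : (0 < k.-1)%N. Proof. by rewrite -subn1 subn_gt0. Qed.

Let subn2_succ : (k - 2).+1 = k.-1. Proof. by rewrite subn2 prednK. Qed.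

Lemma tapplyZ (s : R) x i : tapply P (fun j => s * x j) i = s ^+ k.-1 * tapply P x i.
Proof.
rewrite /tapply mulr_sumr; apply: eq_bigr => idx _.
by rewrite big_split /= prodr_const card_ord mulrCA.
Qed.

Lemma tapply0 i : tapply P (fun=> 0) i = 0.
Proof.
rewrite /tapply big1 // => idx _.
by rewrite (bigD1 (Ordinal predk_gt0)) //= mul0r mulr0.
Qed.

Lemma mlppr_solution_of_fixed_point x s : stochastic x -> mlppr_map P v alpha x = x ->
  s ^+ k.-1 * (1 - alpha * \sum_l tapply P x l) = 1 ->
  mlppr_solution alpha P v (fun i => s * x i).
Proof.
move=> x_stoch fx sE i.
have xE : x i - alpha * tapply P x i = (1 - alpha * \sum_l tapply P x l) * v i.
  by rewrite -{1}fx /mlppr_map addrK.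
rewrite -mulr_sumr x_stoch.2 mulr1 tapplyZ (mulrA (s ^+ _)) -exprSr subn2_succ.
by rewrite [alpha * _]mulrCA -mulrBr xE mulrA sE mul1r.
Qed.

Lemma mlppr_solution_normalize y : stochastic v -> nonneg_vec y ->
  mlppr_solution alpha P v y ->
  exists c x, [/\ 0 <= c, stochastic x, mlppr_map P v alpha x = x,
    y = (fun i => c * x i) & c ^+ k.-1 * (1 - alpha * \sum_l tapply P x l) = 1].
Proof.
move=> v_stoch y_ge0 y_sol; set c := \sum_i y i.
have c_gt0 : 0 < c.
  rewrite lt_def sumr_ge0 ?andbT => [|i _]; last exact: y_ge0.
  apply/eqP => /psumr_eq0P y0.
  have {}y0 : y = fun=> 0 by apply/funext => i; rewrite y0.
  have : \sum_i v i = 0 by rewrite big1 // => i _; rewrite -y_sol y0 tapply0 !mulr0 subr0.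
  by rewrite v_stoch.2 => /eqP; rewrite oner_eq0.
pose x i := y i / c.
have yE : y = (fun i => c * x i).
  by apply/funext => i; rewrite /x mulrC divfK ?gt_eqF.
have x_stoch : stochastic x.
  split=> [i|]; first by rewrite divr_ge0 ?y_ge0 ?ltW.
  by rewrite -mulr_suml mulfV ?gt_eqF.
clearbody c x; subst y.
have x_sol i : c ^+ k.-1 * (x i - alpha * tapply P x i) = v i.
  rewrite -y_sol -mulr_sumr x_stoch.2 mulr1 tapplyZ (mulrA (c ^+ _)) -exprSr subn2_succ.
  by rewrite mulrBr mulrCA.
have cE : c ^+ k.-1 * (1 - alpha * \sum_l tapply P x l) = 1.
  rewrite -[RHS]v_stoch.2 -(eq_bigr _ (fun i _ => x_sol i)) -mulr_sumr.
  by rewrite sumrB x_stoch.2 mulr_sumr.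
exists c, x; split=> //; first exact: ltW.
apply/funext => i; rewrite /mlppr_map -x_sol mulrA (mulrC (1 - _)) cE mul1r.
by rewrite subrK.
Qed.

End mlppr_solution.

Lemma exists_root_inv (R : realType) m (t : R) :
  (0 < m)%N -> 0 < t -> exists2 s, 0 <= s & s ^+ m * t = 1.
Proof.
move=> m_gt0 t_gt0; exists (t^-1 `^ m%:R^-1); first exact: powR_ge0.
rewrite -powR_mulrn ?powR_ge0 // -powRrM mulVf ?gt_eqF ?ltr0n //.
by rewrite powRr1 ?invr_ge0 ?ltW // mulVf ?gt_eqF.
Qed.

Theorem corollary3p16 (R : realType) (k n : nat) (P : tensor R k n)
  (v : 'I_n -> R) (alpha : R) :
  (2 <= k)%N -> (1 <= n)%N ->
  col_substochastic P -> stochastic v ->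
  0 <= alpha -> alpha < 1 ->
  alpha < (k.-1%:R)^-1 ->
  exists! y : 'I_n -> R, nonneg_vec y /\ mlppr_solution alpha P v y.
Proof.
move=> k_ge2 n_gt0 P_sub v_stoch alpha_ge0 alpha_lt1 alpha_small.
have k1_gt0 : (0 < k.-1)%N by rewrite -subn1 subn_gt0.
have q_ge0 : 0 <= alpha * k.-1%:R by rewrite mulr_ge0.
have q_lt1 : alpha * k.-1%:R < 1 by rewrite -ltr_pdivlMr ?ltr0n ?div1r.
have map_stoch := mlppr_map_stochastic P_sub v_stoch alpha_ge0 alpha_lt1.
have map_lip := mlppr_map_lipschitz P_sub v_stoch alpha_ge0.
have [x [x_stoch fx]] := l1_contraction_fixed_point q_ge0 q_lt1 map_stoch map_lip n_gt0.
have t_gt0 := mlppr_weight_gt0 P_sub alpha_ge0 alpha_lt1 x_stoch.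
have [s s_ge0 stE] := exists_root_inv k1_gt0 t_gt0.
exists (fun i => s * x i); split.
  split; first by move=> i; rewrite mulr_ge0 ?x_stoch.1.
  exact: mlppr_solution_of_fixed_point.
move=> y [y_ge0 /(mlppr_solution_normalize k_ge2 v_stoch y_ge0)].
move=> [c [x' [c_ge0 x'_stoch fx' -> ctE]]].
have x'E := l1_contraction_fixed_point_unique q_lt1 map_lip x_stoch x'_stoch fx fx'.
rewrite -x'E in ctE *.
suff -> : c = s by [].
apply: (pexpIrn k1_gt0); rewrite ?nnegrE //.
by apply: (mulIf (lt0r_neq0 t_gt0)); rewrite /= ctE stE.
Qed.
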